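(* Let $C\subset\mathbb{R}^d$ be a smooth centrally symmetric convex body and let $(G,p)$ be a framework in $\mathbb{R}^d$ that is regular with respect to $\|\cdot\|_C$. Then $(G,p)$ is constant with respect to $\|\cdot\|_C$.
   Context: A centrally symmetric convex body $C$ (compact, convex, non-empty interior, $C=-C$) defines the norm $\|x\|_C=\inf\{\lambda>0:x\in\lambda C\}$; $C$ is smooth if every boundary point has a unique supporting hyperplane. A framework $(G,p)$ is a finite simple graph $G=(V,E)$ with $p=(p_v)_{v\in V}\in\mathbb{R}^{d|V|}$. It is well-positioned if $p_v\ne p_w$ for all $vw\in E$ and $f_{G,C}:q\mapsto(\tfrac12\|q_v-q_w\|_C^2)_{vw\in E}$ is differentiable at $p$; then the rigidity matrix $R_C(G,p)$ is the derivative of $f_{G,C}$ at $p$ (row $vw$ has $\varphi_C(p_v-p_w)$ in the $v$ columns, $\varphi_C(p_w-p_v)$ in the $w$ columns, zeros elsewhere, where $\varphi_C(x)$ is the derivative of $\tfrac12\|\cdot\|_C^2$ at $x$). $(G,p)$ is regular if it is well-positioned and $\operatorname{rank}R_C(G,p)\ge\operatorname{rank}R_C(G,q)$ for every well-positioned placement $q$ of $G$. $(G,p)$ is constant if there is a neighbourhood $U$ of $p$ in $\mathbb{R}^{d|V|}$ such that every $q\in U$ gives a well-positioned $(G,q)$ with $\operatorname{rank}R_C(G,q)=\operatorname{rank}R_C(G,p)$. *)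

From HB Require Import structures.
From mathcomp Require Import all_boot all_order all_algebra.
From mathcomp Require Import all_classical all_reals all_analysis.
Set Implicit Arguments. Unset Strict Implicit. Unset Printing Implicit Defensive.
Import Order.TTheory GRing.Theory Num.Theory.
Import numFieldNormedType.Exports.
Local Open Scope classical_set_scope.
Local Open Scope ring_scope.

Definition dotv (R : realType) (d : nat) (u x : 'rV[R]_d) : R :=
  \sum_(i < d) u ord0 i * x ord0 i.

Definition cs_convex_body (R : realType) (d : nat) (C : set 'rV[R]_d) : Prop :=
  [/\ compact C,
      (forall x y (t : R), C x -> C y -> 0 <= t -> t <= 1 ->
          C (t *: x + (1 - t) *: y)),
      interior C !=set0 &
      (forall x, C x <-> C (- x))].

Definition supporting (R : realType) (d : nat) (C : set 'rV[R]_d) (x u : 'rV[R]_d) :=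
  u != 0 /\ forall y, C y -> dotv u y <= dotv u x.

Definition hyperplane (R : realType) (d : nat) (x u : 'rV[R]_d) : set 'rV[R]_d :=
  [set y | dotv u y = dotv u x].

Definition smooth_body (R : realType) (d : nat) (C : set 'rV[R]_d) : Prop :=
  forall x, C x -> ~ interior C x ->
    (exists u, supporting C x u) /\
    (forall u1 u2, supporting C x u1 -> supporting C x u2 ->
       hyperplane x u1 = hyperplane x u2).

Definition normC (R : realType) (d : nat) (C : set 'rV[R]_d) (x : 'rV[R]_d) : R :=
  inf [set l : R | 0 < l /\ exists c, C c /\ x = l *: c].

(* A finite simple graph on vertex set 'I_n with m edges, edge e joining
   (ends e).1 and (ends e).2 (orientation irrelevant). *)
Definition simple_graph (n m : nat) (ends : 'I_m -> 'I_n * 'I_n) : Prop :=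
  (forall e, (ends e).1 != (ends e).2) /\
  (forall e e', ends e = ends e' \/ ends e = ((ends e').2, (ends e').1) -> e = e').

(* placements: row v of q : 'M_(n,d) is q_v *)
Definition fGC (R : realType) (d n m : nat) (C : set 'rV[R]_d)
    (ends : 'I_m -> 'I_n * 'I_n) (q : 'M[R]_(n, d)) : 'rV[R]_m :=
  \row_(e < m) (normC C (row (ends e).1 q - row (ends e).2 q) ^+ 2 / 2).

Definition well_positioned (R : realType) (d n m : nat) (C : set 'rV[R]_d)
    (ends : 'I_m -> 'I_n * 'I_n) (p : 'M[R]_(n, d)) : Prop :=
  (forall e, row (ends e).1 p != row (ends e).2 p) /\
  differentiable (fGC C ends) p.

(* rank of the rigidity matrix = rank of the derivative of fGC at p
   (represented as a matrix via vectorization of placements) *)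
Definition rigidity_rank (R : realType) (d n m : nat) (C : set 'rV[R]_d)
    (ends : 'I_m -> 'I_n * 'I_n) (p : 'M[R]_(n, d)) : nat :=
  \rank (lin1_mx (fun v : 'rV[R]_(n * d) => ('d (fGC C ends) p) (vec_mx v))).

Definition regular (R : realType) (d n m : nat) (C : set 'rV[R]_d)
    (ends : 'I_m -> 'I_n * 'I_n) (p : 'M[R]_(n, d)) : Prop :=
  well_positioned C ends p /\
  forall q, well_positioned C ends q ->
    (rigidity_rank C ends q <= rigidity_rank C ends p)%N.

Definition constant_fw (R : realType) (d n m : nat) (C : set 'rV[R]_d)
    (ends : 'I_m -> 'I_n * 'I_n) (p : 'M[R]_(n, d)) : Prop :=
  \forall q \near p,
    well_positioned C ends q /\ rigidity_rank C ends q = rigidity_rank C ends p.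

(* Let N be the gauge of C. It is sublinear, with N(y) <= |y|/rho when C
   contains the ball of radius rho about 0, and smoothness of C says that at
   every x <> 0 it has exactly one subgradient: the supporting functional of C
   at the boundary point x/N(x), scaled to take the value 1 there. Every
   subgradient has norm at most 1/rho, so the subgradient map is bounded, and
   every cluster point of it at x is again a subgradient at x. Hence it is
   continuous away from 0. Two subgradient inequalities, at x and at y, squeeze
   N(y)^2/2 - N(x)^2/2 between N(x)<grad N(x), y-x> and that term plus
   o(|y-x|). So f_{G,C} is differentiable at every placement whose edges are
   all nonzero, and the entries of its rigidity matrix depend continuously on
   the placement. Nonzero edges are an open condition, and the rank of a
   continuous family of matrices is lower semicontinuous. So every placement
   near a regular p is well-positioned, and its rank is at least, hence by
   regularity exactly, that of p. *)

From HB Require Import structures.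
From mathcomp Require Import all_boot all_order all_algebra.
From mathcomp Require Import all_classical all_reals all_analysis.
From mathcomp Require Import ring lra.
Set Implicit Arguments. Unset Strict Implicit. Unset Printing Implicit Defensive.
Import Order.TTheory GRing.Theory Num.Theory.
Import numFieldNormedType.Exports.
Local Open Scope classical_set_scope.
Local Open Scope ring_scope.

Section MatrixNorm.
Variable R : realType.

Lemma mx_normr_entry a b (M : 'M[R]_(a, b)) i j : `|M i j| <= `|M|.
Proof.
rewrite [leRHS]/Num.Def.normr /= mx_normrE.
exact: le_trans (le_bigmax _ _ (i, j)).
Qed.

Lemma mx_normr_leP a b (M : 'M[R]_(a, b)) c : 0 <= c ->
  (forall i j, `|M i j| <= c) -> `|M| <= c.
Proof.
move=> c0 Mc; rewrite [leLHS]/Num.Def.normr /= mx_normrE.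
by apply/bigmax_leP; split => // -[i j] _; apply: Mc.
Qed.

Lemma mx_normr_row a b (M : 'M[R]_(a, b)) i : `|row i M| <= `|M|.
Proof. by apply: mx_normr_leP => // i' j; rewrite mxE mx_normr_entry. Qed.

Lemma mx_normr_delta a b i j : `|delta_mx i j : 'M[R]_(a, b)| <= 1.
Proof.
apply: mx_normr_leP => // i' j'; rewrite mxE.
by case: (_ && _); rewrite ?normr1 ?normr0.
Qed.

End MatrixNorm.

Section Dot.
Variables (R : realType) (d : nat).
Implicit Types u x y : 'rV[R]_d.

Lemma dotv_is_linear u : linear_for *%R (dotv u).
Proof.
move=> a x y; rewrite /dotv mulr_sumr -big_split /=.
by apply: eq_bigr => i _; rewrite !mxE; ring.
Qed.

HB.instance Definition _ u :=
  GRing.isLinear.Build R 'rV[R]_d R *%R (dotv u) (dotv_is_linear u).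

Lemma dotvC u x : dotv u x = dotv x u.
Proof. by apply: eq_bigr => i _; rewrite mulrC. Qed.

Lemma dotv0l x : dotv 0 x = 0.
Proof. by rewrite dotvC linear0. Qed.

Lemma dotvZl a u x : dotv (a *: u) x = a * dotv u x.
Proof. by rewrite dotvC linearZ /= dotvC. Qed.

Lemma dotvBl u1 u2 x : dotv (u1 - u2) x = dotv u1 x - dotv u2 x.
Proof. by rewrite dotvC linearB /= !(dotvC x). Qed.

Lemma dotv_delta u i : dotv u (delta_mx 0 i) = u 0 i.
Proof.
rewrite /dotv (bigD1 i) //= big1 ?addr0 => [|j /negbTE ji]; rewrite mxE.
  by rewrite !eqxx mulr1.
by rewrite ji andbF mulr0.
Qed.

Lemma dotv_bound u x : `|dotv u x| <= d%:R * `|u| * `|x|.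
Proof.
have -> : d%:R * `|u| * `|x| = \sum_(i < d) `|u| * `|x|.
  by rewrite sumr_const card_ord -mulrA mulr_natl.
rewrite (le_trans (ler_norm_sum _ _ _)) //; apply: ler_sum => i _; rewrite normrM.
by apply: ler_pM => //; apply: mx_normr_entry.
Qed.

Lemma dotv_gt0 u : u != 0 -> 0 < dotv u u.
Proof.
move=> u0; have [i ui] : exists i, u 0 i != 0.
  apply/existsP; apply: contraR u0; rewrite negb_exists => /forallP u0.
  by apply/eqP/rowP => i; rewrite mxE; apply/eqP/negPn/u0.
rewrite /dotv (bigD1 i) //= ltr_wpDr ?sumr_ge0 // => [j _|]; rewrite -expr2.
  exact: sqr_ge0.
by rewrite exprn_even_gt0.
Qed.

Lemma hyperplane_inj s u1 u2 : dotv u1 s = 1 -> dotv u2 s = 1 ->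
  hyperplane s u1 = hyperplane s u2 -> u1 = u2.
Proof.
move=> u1s u2s u12; apply/rowP => i; rewrite -!dotv_delta.
pose w := s + (delta_mx 0 i - dotv u1 (delta_mx 0 i) *: s).
have : hyperplane s u1 w by rewrite /hyperplane /= !linearD linearN linearZ /= u1s; ring.
by rewrite u12 /hyperplane /= !linearD linearN linearZ /= u2s => ?; lra.
Qed.

End Dot.

Section Limits.
Variable R : realType.

Lemma cvg_lipschitz_at (V W : normedModType R) (f : V -> W) (k : R) (x : V) :
  (forall y, `|f y - f x| <= k * `|y - x|) -> f @ x --> f x.
Proof.
move=> fk; apply/cvgrPdist_lt => e e0.
have k1 : 0 < `|k| + 1 by rewrite ltr_wpDl.
near=> y; rewrite distrC (le_lt_trans (fk y)) //.
apply: (@le_lt_trans _ _ ((`|k| + 1) * `|y - x|)).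
  by rewrite ler_wpM2r // (le_trans (ler_norm k)) // lerDl.
rewrite -ltr_pdivlMl // mulrC distrC; near: y.
by apply: cvgr_dist_lt; rewrite // divr_gt0.
Unshelve. all: by end_near.
Qed.

Lemma cluster_closed (T U : topologicalType) (f : T -> U) (x : T) (A : set U) u :
  closed A -> (\forall z \near x, A (f z)) -> cluster (f @ x) u -> A u.
Proof. by move=> /closure_id Acl fA; rewrite Acl clusterE => /(_ A fA). Qed.

Lemma closed_ball0_compact n (r : R) :
  0 < r -> compact (closed_ball (0 : 'rV[R]_n) r).
Proof.
move=> r0; apply: bounded_closed_compact; last exact: closed_ball_closed.
exists r; split; first by rewrite gtr0_real.
move=> M rM v; rewrite closed_ballE // /closed_ball_ /= sub0r normrN => vr.
exact: le_trans vr (ltW rM).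
Qed.

Lemma cvg_bounded_cluster (T : topologicalType) n (f : T -> 'rV[R]_n) (x : T) r :
  (forall z, `|f z| <= r) -> (forall u, cluster (f @ x) u -> u = f x) ->
  f @ x --> f x.
Proof.
move=> fr clx; have r1 : 0 < r + 1 by rewrite ltr_wpDl // (le_trans _ (fr x)).
have V_f z : closed_ball 0 (r + 1) (f z).
  by rewrite closed_ballE // /closed_ball_ /= sub0r normrN (le_trans (fr z)) // lerDl.
have fV : (f @ x) (closed_ball 0 (r + 1)) by apply: nearW.
apply: (@compact_cluster_set1 _ (f x) (f @ x) _ _ (closed_ball0_compact r1)).
- exact: norm_hausdorff.
- apply/nbhs_ballP; exists 1 => [|v]; first exact: ltr01.
  rewrite -ball_normE /= => xv.
  rewrite closed_ballE // /closed_ball_ /= (le_trans (ler_distD (f x) 0 v)) //.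
  by rewrite sub0r normrN lerD // ltW.
- exact: fV.
- have [u [_ clu]] : closed_ball 0 (r + 1) `&` cluster (f @ x) !=set0.
    exact: closed_ball0_compact r1 _ _ fV.
  apply/seteqP; split => [v /clx -> //|v ->]; by rewrite -(clx u clu).
Qed.

Lemma dotv_continuous_l d (y : 'rV[R]_d) : continuous (fun v => dotv v y).
Proof.
move=> v; apply: (@cvg_lipschitz_at _ _ _ (d%:R * `|y|)) => w.
by rewrite -dotvBl (le_trans (dotv_bound _ _)) // mulrAC.
Qed.

Lemma closed_dotv_le d (y : 'rV[R]_d) (c : R) : closed [set v | dotv v y <= c].
Proof.
apply: (@preimage_closed _ _ (fun v => dotv v y) [set r | r <= c]).
  by move=> v _; exact: dotv_continuous_l.
exact: closed_le.
Qed.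

Lemma closed_dotv_ge d (y : 'rV[R]_d) (c : R) : closed [set v | c <= dotv v y].
Proof.
apply: (@preimage_closed _ _ (fun v => dotv v y) [set r | c <= r]).
  by move=> v _; exact: dotv_continuous_l.
exact: closed_ge.
Qed.

End Limits.

Section MatrixLimits.
Variables (R : realType) (T : Type) (F : set_system T).
Hypothesis FF : Filter F.

Lemma cvg_mulmx a b c (A : T -> 'M[R]_(a, b)) (B : T -> 'M[R]_(b, c))
    (A0 : 'M[R]_(a, b)) (B0 : 'M[R]_(b, c)) :
  (forall i j, (fun x => A x i j) @ F --> A0 i j) ->
  (forall i j, (fun x => B x i j) @ F --> B0 i j) ->
  forall i j, (fun x => (A x *m B x) i j) @ F --> (A0 *m B0) i j.
Proof.
move=> AA0 BB0 i j; rewrite mxE; under eq_cvg do rewrite mxE.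
apply: cvg_big => [|k _]; first exact: add_continuous.
exact: cvgM.
Qed.

Lemma cvg_det a (A : T -> 'M[R]_a) (A0 : 'M[R]_a) :
  (forall i j, (fun x => A x i j) @ F --> A0 i j) ->
  (fun x => \det (A x)) @ F --> \det A0.
Proof.
move=> AA0; apply: cvg_big => [|s _]; first exact: add_continuous.
apply: cvgM; first exact: cvg_cst.
apply: cvg_big => [|i _]; first exact: mul_continuous.
exact: AA0.
Qed.

End MatrixLimits.

Lemma mxrank_lsc (R : realType) (T : topologicalType) a b
    (A : T -> 'M[R]_(a, b)) (p : T) :
  (forall i j, (fun q => A q i j) @ p --> A p i j) ->
  \forall q \near p, (\rank (A p) <= \rank (A q))%N.
Proof.
move=> Acont; set r := \rank (A p).
(* [X *m A p *m Y] is an invertible [r x r] minor of [A p]; its determinant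
   stays away from [0] near [p]. *)
set X := (pid_mx r *m invmx (col_ebase (A p)) : 'M[R]_(r, a)).
set Y := (invmx (row_ebase (A p)) *m pid_mx r : 'M[R]_(b, r)).
have XAY : X *m A p *m Y = 1%:M.
  rewrite /X /Y; set M := A p; rewrite -{2}(mulmx_ebase M) !mulmxA.
  rewrite -(mulmxA _ (invmx (col_ebase M))) mulVmx ?col_ebase_unit // mulmx1.
  rewrite -(mulmxA _ (row_ebase M)).
  rewrite mulmxV ?row_ebase_unit // mulmx1.
  by rewrite pid_mx_id ?rank_leq_row // pid_mx_id ?rank_leq_col // pid_mx_1.
have : (fun q => \det (X *m A q *m Y)) @ p --> \det (X *m A p *m Y).
  apply: cvg_det; apply: cvg_mulmx => [|i j]; last exact: cvg_cst.
  by apply: cvg_mulmx => // i j; exact: cvg_cst.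
rewrite XAY det1 => /cvgr_dist_lt /(_ _ ltr01); apply: filterS => q near1.
have : \rank (X *m A q *m Y) = r.
  apply: mxrank_unit; rewrite unitmxE unitfE; apply: contraTneq near1 => ->.
  by rewrite subr0 normr1 ltxx.
by move <-; rewrite (leq_trans (mxrankM_maxl _ _)) // mxrankM_maxr.
Qed.

Section EdgeVectors.
Variables (R : realType) (d n m : nat) (ends : 'I_m -> 'I_n * 'I_n).

Definition edge_vec e (q : 'M[R]_(n, d)) : 'rV[R]_d :=
  row (ends e).1 q - row (ends e).2 q.

Lemma edge_vec_is_linear e : linear (edge_vec e).
Proof. by move=> a q k; apply/rowP => j; rewrite !mxE; ring. Qed.

HB.instance Definition _ e :=
  GRing.isLinear.Build R 'M[R]_(n, d) 'rV[R]_d _ (edge_vec e) (edge_vec_is_linear e).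

Lemma edge_vec_norm e q : `|edge_vec e q| <= 2 * `|q|.
Proof.
rewrite (le_trans (ler_normB _ _)) // mulr2n mulrDl mul1r.
by rewrite lerD // mx_normr_row.
Qed.

Lemma edge_vec_continuous e : continuous (edge_vec e).
Proof.
by move=> q; apply: (@cvg_lipschitz_at _ _ _ _ 2) => k; rewrite -linearB edge_vec_norm.
Qed.

End EdgeVectors.

Section Gauge.
Variables (R : realType) (d : nat) (C : set 'rV[R]_d).
Hypothesis hC : cs_convex_body C.

Lemma cs_body_ball0 : exists2 rho : R, 0 < rho & forall w, `|w| < rho -> C w.
Proof.
case: hC => _ conv [z /nbhs_ballP[e e0 ze]] sym; exists e => // w we.
have Czw : C (z + w).
  by apply: ze; rewrite -ball_normE /= opprD addrA subrr sub0r normrN.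
have Cwz : C (w - z).
  rewrite -opprB -sym; apply: ze.
  by rewrite -ball_normE /= opprB addrC subrK.
have := conv _ _ (1 / 2) Czw Cwz.
have -> : 1 / 2 *: (z + w) + (1 - 1 / 2) *: (w - z) = w.
  by apply/rowP => i; rewrite !mxE; field.
by apply; lra.
Qed.

Lemma cs_body_bounded : exists2 B : R, 0 < B & forall c, C c -> `|c| < B.
Proof.
case: hC => /compact_bounded[M [Mr MC]] _ _ _.
exists (`|M| + 1); first by rewrite ltr_wpDl.
move=> c /(MC (`|M| + 1/2)) cM; apply: le_lt_trans (cM _) _.
  by rewrite (le_lt_trans (real_ler_norm Mr)) // ltrDl.
by rewrite ltrD2l; lra.
Qed.

Variables rho B : R.
Hypotheses (rho_gt0 : 0 < rho) (ball_sub : forall w, `|w| < rho -> C w).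
Hypotheses (B_gt0 : 0 < B) (sub_ball : forall c, C c -> `|c| < B).

Local Notation N := (normC C).
Local Notation dilates x := [set l : R | 0 < l /\ exists c, C c /\ x = l *: c].

Lemma cs_body0 : C 0.
Proof. by apply: ball_sub; rewrite normr0. Qed.

Lemma dilates_large x l : 0 < l -> `|x| < l * rho -> dilates x l.
Proof.
move=> l0 xl; split => //; exists (l^-1 *: x); split.
  by apply: ball_sub; rewrite normrZ gtr0_norm ?invr_gt0 // ltr_pdivrMl.
by rewrite scalerA mulfV ?scale1r ?gt_eqF.
Qed.

Lemma dilates_neq0 x : dilates x !=set0.
Proof.
exists (`|x| / rho + 1); apply: dilates_large.
  by rewrite ltr_wpDl // divr_ge0 // ltW.
by rewrite mulrDl mul1r divfK ?gt_eqF // ltrDl.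
Qed.

Lemma dilatesW x l l' : dilates x l -> l <= l' -> dilates x l'.
Proof.
move=> [l0 [c [Cc ->]]] ll'; have l'0 : 0 < l' by apply: lt_le_trans ll'.
split => //; exists ((l / l') *: c); split.
  have [_ conv _ _] := hC; have := conv c 0 (l / l') Cc cs_body0.
  rewrite scaler0 addr0; apply; first by rewrite divr_ge0 // ltW.
  by rewrite ler_pdivrMr // mul1r.
by rewrite scalerA mulrCA mulfV ?mulr1 // gt_eqF.
Qed.

Lemma dilates_lbound x : lbound (dilates x) 0.
Proof. by move=> l [l0 _]; apply: ltW. Qed.

Lemma normC_ge0 x : 0 <= N x.
Proof. exact: lb_le_inf (dilates_neq0 x) (@dilates_lbound x). Qed.

Lemma normC_le x l : dilates x l -> N x <= l.
Proof. by move=> xl; apply: ge_inf xl; exists 0; apply: dilates_lbound. Qed.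

Lemma normC_lt x l : N x < l -> dilates x l.
Proof.
by move=> /(inf_lt (dilates_neq0 x))[l' xl' /ltW]; apply: dilatesW.
Qed.

Lemma normC_le1 y : C y -> N y <= 1.
Proof. by move=> Cy; apply: normC_le; split => //; exists y; rewrite scale1r. Qed.

Lemma normC_ub x : N x <= `|x| / rho.
Proof.
apply/ler_addgt0Pr => e e0; apply/normC_le/dilates_large.
  by rewrite ltr_wpDl // divr_ge0 // ltW.
by rewrite mulrDl divfK ?gt_eqF // ltrDl mulr_gt0.
Qed.

Lemma normC_lb x : `|x| / B <= N x.
Proof.
apply: lb_le_inf; first exact: dilates_neq0.
move=> l [l0 [c [Cc ->]]].
by rewrite normrZ gtr0_norm // ler_pdivrMr // ler_pM2l // ltW // sub_ball.
Qed.

Lemma normC0 : N 0 = 0.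
Proof.
by apply/eqP; rewrite eq_le normC_ge0 andbT (le_trans (normC_ub 0)) // normr0 mul0r.
Qed.

Lemma normC_gt0 x : x != 0 -> 0 < N x.
Proof. by move=> x0; apply: lt_le_trans (normC_lb x); rewrite divr_gt0 ?normr_gt0. Qed.

Lemma normC_scale_mem x : x != 0 -> C ((N x)^-1 *: x).
Proof.
move=> x0; have Nx0 := normC_gt0 x0.
have Ccl : closed C by case: hC => + _ _ _; apply: compact_closed; apply: norm_hausdorff.
apply: (@closed_cvg _ _ (0^'+) _ (fun t : R => (N x + t)^-1 *: x) C Ccl).
  near=> t; have t0 : 0 < t by near: t; apply: nbhs_right_gt.
  have [_ [c [Cc xc]]] := @normC_lt x (N x + t) ltac:(by rewrite ltrDl).
  by rewrite [X in _ *: X]xc scalerA mulVf ?scale1r // gt_eqF // ltr_wpDr // ltW.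
apply: cvgZr_tmp; rewrite -[X in X^-1]addr0.
apply: cvgV; first by rewrite addr0 gt_eqF.
by apply: cvgD; [exact: cvg_cst | exact: cvg_within].
Unshelve. all: by end_near.
Qed.

Lemma normC_scale_boundary x : x != 0 -> ~ interior C ((N x)^-1 *: x).
Proof.
move=> x0 /nbhs_ballP[e e0 se]; have Nx0 := normC_gt0 x0.
set s := (N x)^-1 *: x; set t := e / (`|s| + 1).
have t0 : 0 < t by rewrite divr_gt0 // ltr_wpDl.
have t1 : 0 < 1 + t by rewrite addrC ltr_wpDl // ltW.
have Cs : C ((1 + t) *: s).
  apply: se; rewrite -ball_normE /= scalerDl scale1r opprD addrA subrr sub0r.
  rewrite normrN normrZ gtr0_norm // /t mulrAC ltr_pdivrMr ?ltr_wpDl //.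
  by rewrite ltr_pM2l // ltrDl.
have : N x <= N x / (1 + t).
  apply: normC_le; split; first by rewrite divr_gt0.
  exists ((1 + t) *: s); split => //.
  by rewrite /s !scalerA divfK ?mulfV ?scale1r // gt_eqF.
by rewrite ler_pdivlMr // ger_pMr // gerDl leNgt t0.
Qed.

Definition subgrad_normC x u := (forall y, dotv u y <= N y) /\ dotv u x = N x.

Lemma subgrad_normC_supporting x u : x != 0 -> subgrad_normC x u ->
  supporting C ((N x)^-1 *: x) u /\ dotv u ((N x)^-1 *: x) = 1.
Proof.
move=> x0 [uN ux]; have us : dotv u ((N x)^-1 *: x) = 1.
  by rewrite linearZ /= ux mulVf // gt_eqF // normC_gt0.
split=> //; split=> [|y Cy]; last by rewrite us (le_trans (uN y)) // normC_le1.
by apply/eqP => u0; move: us; rewrite u0 dotv0l => /eqP; rewrite eq_sym oner_eq0.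
Qed.

Hypothesis hS : smooth_body C.

Lemma subgrad_normC_exists x : exists u, subgrad_normC x u.
Proof.
have [->|x0] := eqVneq x 0.
  by exists 0; rewrite /subgrad_normC normC0; split=> [y|]; rewrite dotv0l ?normC_ge0.
have Nx0 := normC_gt0 x0.
have [[v [v0 vC]] _] := hS (normC_scale_mem x0) (normC_scale_boundary x0).
set s := (N x)^-1 *: x in vC.
have xs : x = N x *: s by rewrite /s scalerA mulfV ?scale1r // gt_eqF.
clearbody s.
have vs0 : 0 < dotv v s.
  pose t := rho / (2 * (`|v| + 1)).
  have t0 : 0 < t by rewrite divr_gt0 // mulr_gt0 // ltr_wpDl.
  have Ctv : C (t *: v).
    apply: ball_sub; rewrite normrZ gtr0_norm // /t mulrAC.
    rewrite ltr_pdivrMr ?mulr_gt0 ?ltr_wpDl // ltr_pM2l //; have := normr_ge0 v; lra.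
  apply: (lt_le_trans _ (vC _ Ctv)); by rewrite linearZ /= mulr_gt0 // dotv_gt0.
exists ((dotv v s)^-1 *: v); split=> [y|].
  apply/ler_addgt0Pr => e e0.
  have [l0 [c [Cc yc]]] := @normC_lt y (N y + e) ltac:(by rewrite ltrDl).
  rewrite [X in dotv _ X]yc linearZ /= dotvZl ger_pMr // ler_pdivrMl // mulr1.
  exact: vC.
by rewrite dotvZl [in dotv v x]xs linearZ /= mulrCA mulVf ?mulr1 // gt_eqF.
Qed.

Lemma subgrad_normC_unique x u1 u2 : x != 0 ->
  subgrad_normC x u1 -> subgrad_normC x u2 -> u1 = u2.
Proof.
move=> x0 /(subgrad_normC_supporting x0)[u1C u1s].
move=> /(subgrad_normC_supporting x0)[u2C u2s].
have [_ hyp_eq] := hS (normC_scale_mem x0) (normC_scale_boundary x0).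
exact: hyperplane_inj u1s u2s (hyp_eq _ _ u1C u2C).
Qed.

Definition gradC x := xget 0 (subgrad_normC x).

Lemma gradCP x : subgrad_normC x (gradC x).
Proof. exact: xgetPex (subgrad_normC_exists x). Qed.

Lemma dotv_gradC_le x w : `|dotv (gradC x) w| <= `|w| / rho.
Proof.
have [gN _] := gradCP x; rewrite ler_norml; apply/andP; split.
  by rewrite lerNl -linearN (le_trans (gN _)) // (le_trans (normC_ub _)) // normrN.
exact: le_trans (gN _) (normC_ub _).
Qed.

Lemma gradC_norm x : `|gradC x| <= rho^-1.
Proof.
apply: mx_normr_leP => [|i j]; first by rewrite invr_ge0 ltW.
rewrite ord1 -dotv_delta (le_trans (dotv_gradC_le _ _)) // ler_pdivrMr //.
by rewrite mulVf ?gt_eqF // mx_normr_delta.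
Qed.

Lemma normC_subgrad_le x y : N x + dotv (gradC x) (y - x) <= N y.
Proof. by have [gN gx] := gradCP x; rewrite linearB /= gx addrC subrK gN. Qed.

Lemma normC_lipschitz x y : `|N y - N x| <= `|y - x| / rho.
Proof.
have := normC_subgrad_le x y; have := normC_subgrad_le y x.
have /ler_normlP[+ +] := dotv_gradC_le x (y - x).
have /ler_normlP[+ +] := dotv_gradC_le y (x - y).
rewrite distrC => *; rewrite ler_norml; apply/andP; split; lra.
Qed.

Lemma subgrad_normC_cluster (x u : 'rV[R]_d) :
  cluster (gradC @ x) u -> subgrad_normC x u.
Proof.
(* Both defining inequalities hold near [x] and cut out closed sets of [u]. *)
move=> clu; have uN y : dotv u y <= N y.
  apply: (cluster_closed (@closed_dotv_le _ _ y (N y)) _ clu).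
  exact: filterS (fun z _ => (gradCP z).1 y) filterT.
split=> //; apply/eqP; rewrite eq_le uN /=; apply/ler_addgt0Pr => e e0.
suff : N x - e <= dotv u x by lra.
apply: (cluster_closed (@closed_dotv_ge _ _ x (N x - e)) _ clu).
have r0 : 0 < e * rho / 2 by rewrite divr_gt0 // mulr_gt0.
apply: filterS (nbhsx_ballx x _ r0) => z; rewrite -ball_normE /= => xz.
have xz' : `|x - z| / rho < e / 2 by rewrite ltr_pdivrMr // mulrAC.
have gzx : dotv (gradC z) x = N z + dotv (gradC z) (x - z).
  by rewrite linearB /= (gradCP z).2; ring.
have /ler_normlP[+ _] := dotv_gradC_le z (x - z).
have /ler_normlP[_] := normC_lipschitz z x.
by rewrite /= gzx; lra.
Qed.

Lemma gradC_continuous (x : 'rV[R]_d) : x != 0 -> gradC @ x --> gradC x.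
Proof.
move=> x0; apply: (cvg_bounded_cluster gradC_norm) => u /subgrad_normC_cluster ux.
exact: subgrad_normC_unique x0 ux (gradCP x).
Qed.

Lemma normC_continuous : continuous N.
Proof.
move=> x; apply: (@cvg_lipschitz_at _ _ _ _ rho^-1) => y.
by rewrite mulrC normC_lipschitz.
Qed.

Lemma sqr_normC_expansion x y :
  `|N y ^+ 2 / 2 - N x ^+ 2 / 2 - N x * dotv (gradC x) (y - x)|
    <= N x * (d%:R * `|gradC y - gradC x| * `|y - x|) + (`|y - x| / rho) ^+ 2 / 2.
Proof.
set a := N x; set b := N y; set G := dotv (gradC x) (y - x).
have a0 : 0 <= a := normC_ge0 x.
have lo : a + G <= b := normC_subgrad_le x y.
have hi : b - a - G <= dotv (gradC y - gradC x) (y - x).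
  have := normC_subgrad_le y x.
  by rewrite dotvBl -/G -/a -/b -opprB linearN /=; lra.
have /ler_normlP[_ dG] := dotv_bound (gradC y - gradC x) (y - x).
have /ler_normlP[ba1 ba2] := normC_lipschitz x y.
have sq : (b - a) ^+ 2 <= (`|y - x| / rho) ^+ 2 by nra.
have p2 : a * (b - a - G) <= a * (d%:R * `|gradC y - gradC x| * `|y - x|).
  by rewrite ler_wpM2l //; lra.
(* The subgradient inequalities at [x] and at [y] control both summands. *)
have -> : b ^+ 2 / 2 - a ^+ 2 / 2 - a * G = a * (b - a - G) + (b - a) ^+ 2 / 2.
  by field.
have p1 : 0 <= a * (b - a - G) by rewrite mulr_ge0 //; lra.
by rewrite ger0_norm; have := sqr_ge0 (b - a); lra.
Qed.

Lemma sqr_normC_near (x : 'rV[R]_d) : x != 0 -> forall e, 0 < e ->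
  \forall y \near x,
    `|N y ^+ 2 / 2 - N x ^+ 2 / 2 - N x * dotv (gradC x) (y - x)| <= e * `|y - x|.
Proof.
move=> x0 e e0; set c := N x * d%:R.
have c0 : 0 <= c by rewrite mulr_ge0 ?normC_ge0.
have e1 : 0 < e / (2 * (c + 1)) by rewrite divr_gt0 // mulr_gt0 // ltr_wpDl.
have e2 : 0 < e * rho ^+ 2 by rewrite mulr_gt0 // exprn_gt0.
near=> y; rewrite (le_trans (sqr_normC_expansion x y)) //.
have gxy : `|gradC y - gradC x| < e / (2 * (c + 1)).
  by rewrite distrC; near: y; exact: cvgr_dist_lt (gradC_continuous x0) _ e1.
have xy : `|y - x| < e * rho ^+ 2.
  by rewrite distrC; near: y; have := nbhsx_ballx x _ e2; rewrite -ball_normE.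
set t := `|y - x| in xy *; have t0 : 0 <= t := normr_ge0 _.
have h1 : N x * (d%:R * `|gradC y - gradC x| * t) <= e / 2 * t.
  have -> : N x * (d%:R * `|gradC y - gradC x| * t) = c * `|gradC y - gradC x| * t.
    by rewrite /c; ring.
  rewrite ler_wpM2r // (le_trans (ler_wpM2l c0 (ltW gxy))) // mulrA.
  by rewrite ler_pdivrMr ?mulr_gt0 ?ltr_wpDl //; nra.
have h2 : (t / rho) ^+ 2 <= e * t.
  rewrite expr_div_n expr2 -mulrA mulrC ler_wpM2r //.
  by rewrite ler_pdivrMr ?exprn_gt0 //; apply: ltW.
lra.
Unshelve. all: by end_near.
Qed.

Section Framework.
Variables (n m : nat) (ends : 'I_m -> 'I_n * 'I_n).
Local Notation x_ e q := (edge_vec ends e q).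

Definition rigidity_lin (q k : 'M[R]_(n, d)) : 'rV[R]_m :=
  \row_e (N (x_ e q) * dotv (gradC (x_ e q)) (x_ e k)).

Lemma rigidity_lin_is_linear q : linear (rigidity_lin q).
Proof. by move=> a k k'; apply/rowP => e; rewrite !mxE !linearP /=; ring. Qed.

HB.instance Definition _ q := GRing.isLinear.Build R 'M[R]_(n, d) 'rV[R]_m _
  (rigidity_lin q) (rigidity_lin_is_linear q).

Lemma rigidity_lin_continuous q : continuous (rigidity_lin q).
Proof.
have Nq0 : 0 <= \sum_e N (x_ e q) by apply: sumr_ge0 => e _; exact: normC_ge0.
move=> k0; apply: (@cvg_lipschitz_at _ _ _ _ ((\sum_e N (x_ e q)) * 2 / rho)) => k.
rewrite -linearB; apply: mx_normr_leP => [|i e].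
  by rewrite !mulr_ge0 // invr_ge0 ltW.
rewrite mxE normrM ger0_norm ?normC_ge0 // -!mulrA.
apply: ler_pM; rewrite ?normC_ge0 //.
  by rewrite (bigD1 e) //= lerDl; apply: sumr_ge0 => j _; exact: normC_ge0.
rewrite (le_trans (dotv_gradC_le _ _)) // mulrCA [rho^-1 * _]mulrC.
by rewrite ler_pM2r ?invr_gt0 // edge_vec_norm.
Qed.

Lemma fGC_expansion q : (forall e, x_ e q != 0) ->
  fGC C ends \o shift q =
    cst (fGC C ends q) + rigidity_lin q +o_ (0 : 'M[R]_(n, d)) id.
Proof.
move=> q_ne; apply/eqaddoP => eps eps0.
have edge_near e : \forall k \near (0 : 'M[R]_(n, d)),
    `|(fGC C ends (k + q) - (fGC C ends q + rigidity_lin q k)) 0 e| <= eps * `|k|.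
  have x_shift : (fun k => x_ e (k + q)) @ (0 : 'M[R]_(n, d)) --> x_ e q.
    have := @cvg_lipschitz_at _ _ _ (fun k => x_ e (k + q)) 2 0; rewrite add0r; apply.
    by move=> k; rewrite -linearB /= addrK subr0 edge_vec_norm.
  have eps2 : 0 < eps / 2 by rewrite divr_gt0.
  have near_q := x_shift _ (sqr_normC_near (q_ne e) eps2).
  near=> k; rewrite !mxE -/(x_ e (k + q)) -/(x_ e q) opprD addrA.
  have : `|N (x_ e (k + q)) ^+ 2 / 2 - N (x_ e q) ^+ 2 / 2 -
      N (x_ e q) * dotv (gradC (x_ e q)) (x_ e (k + q) - x_ e q)|
      <= eps / 2 * `|x_ e (k + q) - x_ e q| by near: k; exact: near_q.
  rewrite -linearB /= addrK => /le_trans; apply.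
  by have := edge_vec_norm ends e k; have := normr_ge0 (x_ e k); nra.
near=> k; have k_edges : forall e, `|(fGC C ends (k + q) -
    (fGC C ends q + rigidity_lin q k)) 0 e| <= eps * `|k|.
  by near: k; exact: filter_forall edge_near.
apply: mx_normr_leP => [|i e]; first by rewrite mulr_ge0 // ltW.
by rewrite ord1; exact: k_edges.
Unshelve. all: by end_near.
Qed.

Lemma fGC_differentiable q : (forall e, x_ e q != 0) ->
  differentiable (fGC C ends) q /\ 'd (fGC C ends) q = rigidity_lin q :> (_ -> _).
Proof.
move=> q_ne; have fq := fGC_expansion q_ne.
have dfE := diff_unique (@rigidity_lin_continuous q) fq.
split; last by rewrite dfE.
by apply/diff_locallyP; rewrite dfE; split; first exact: rigidity_lin_continuous.
Qed.

Definition rigidity_mx q : 'M[R]_(n * d, m) :=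
  lin1_mx (fun v => rigidity_lin q (vec_mx v)).

Lemma rigidity_rankE q : (forall e, x_ e q != 0) ->
  rigidity_rank C ends q = \rank (rigidity_mx q).
Proof. by move=> /fGC_differentiable[_ dfE]; rewrite /rigidity_rank dfE. Qed.

Lemma rigidity_mxE q i e : rigidity_mx q i e =
  N (x_ e q) * dotv (gradC (x_ e q)) (x_ e (vec_mx (delta_mx 0 i))).
Proof. by rewrite !mxE. Qed.

Lemma rigidity_mx_cvg (p : 'M[R]_(n, d)) i e : x_ e p != 0 ->
  (fun q => rigidity_mx q i e) @ p --> rigidity_mx p i e.
Proof.
move=> p_ne; rewrite rigidity_mxE; under eq_cvg do rewrite rigidity_mxE.
have h1 : (fun q => N (x_ e q)) @ p --> N (x_ e p).
  apply: (@continuous_comp _ _ _ (edge_vec ends e)); first exact: edge_vec_continuous.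
  exact: normC_continuous.
set w := x_ e (vec_mx (delta_mx 0 i)).
have h2 : (fun q => dotv (gradC (x_ e q)) w) @ p --> dotv (gradC (x_ e p)) w.
  apply: (@continuous_comp _ _ _ (edge_vec ends e) (fun y => dotv (gradC y) w)).
    exact: edge_vec_continuous.
  apply: (@continuous_comp _ _ _ gradC (fun u => dotv u w)).
    exact: gradC_continuous.
  exact: dotv_continuous_l.
exact: (@cvgM _ _ (nbhs p) _ _ _ _ _ h1 h2).
Qed.

Lemma rigidity_rank_lsc (p : 'M[R]_(n, d)) : (forall e, x_ e p != 0) ->
  \forall q \near p, well_positioned C ends q /\
    (rigidity_rank C ends p <= rigidity_rank C ends q)%N.
Proof.
move=> p_ne; have near_ne : \forall q \near p, forall e, x_ e q != 0.
  apply: (@filter_forall _ _ _ (nbhs p) _) => e.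
  have xp0 : 0 < `|x_ e p| by rewrite normr_gt0.
  have near_xp := @cvgr_dist_lt _ _ _ (nbhs p) _ _ _
    (@edge_vec_continuous _ _ _ _ ends e p) _ xp0.
  near=> q; have : `|x_ e p - x_ e q| < `|x_ e p| by near: q; exact: near_xp.
  by apply: contraTneq => ->; rewrite subr0 ltxx.
near=> q; have q_ne : forall e, x_ e q != 0 by near: q.
split.
  split; last exact: (fGC_differentiable q_ne).1.
  by move=> e; rewrite -subr_eq0; exact: q_ne.
rewrite !rigidity_rankE //; near: q.
by apply: (@mxrank_lsc _ _ _ _ rigidity_mx p) => i e; exact: rigidity_mx_cvg.
Unshelve. all: by end_near.
Qed.

End Framework.

End Gauge.

Theorem proposition2p6 (R : realType) (d n m : nat) (C : set 'rV[R]_d)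
    (ends : 'I_m -> 'I_n * 'I_n) (p : 'M[R]_(n, d)) :
  cs_convex_body C -> smooth_body C -> simple_graph ends ->
  regular C ends p -> constant_fw C ends p.
Proof.
move=> hC hS _ [[p_edges _] p_max].
have [rho rho_gt0 ball_sub] := cs_body_ball0 hC.
have [B B_gt0 sub_ball] := cs_body_bounded hC.
have p_ne e : edge_vec ends e p != 0 by rewrite subr_eq0 p_edges.
apply: filterS (rigidity_rank_lsc hC rho_gt0 ball_sub B_gt0 sub_ball hS p_ne).
move=> q [q_wp le_pq]; split; first exact: q_wp.
by apply/eqP; rewrite eqn_leq; apply/andP; split; [exact: p_max | exact: le_pq].
Qed.
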